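(* Consider mixed site/bond percolation on the $m\times m$ grid $[m]^2$ in which each node is open with probability $p$ and each link is open with probability $q$, all independently. Then the size of the largest bond-connected component stochastically dominates the size of the largest open component in site percolation on $[m]^2$ in which each node is open independently with probability $pq^2$.
   Context: The grid has node set $[m]^2=\{1,\dots,m\}^2$, and links between pairs of nodes at $\ell_1$ distance one (with the same adjacency used in both models). In the mixed model, two nodes $u,v$ are bond-connected if there is a sequence of open nodes $u=u_1,\dots,u_\ell=v$ such that each link $u_iu_{i+1}$ is open; bond-connected components are the classes of this relation. In site percolation, open components are the maximal sets of open nodes connected through adjacent open nodes. *)

From HB Require Import structures.
From mathcomp Require Import all_boot all_order all_algebra.
Set Implicit Arguments. Unset Strict Implicit. Unset Printing Implicit Defensive.
Import Order.TTheory GRing.Theory Num.Theory.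

(* Nodes of the m x m grid [m]^2, encoded as 'I_m * 'I_m (coordinate i stands for i+1). *)
Definition node (m : nat) : finType := ('I_m * 'I_m)%type.

Definition absdiff (a b : nat) : nat := (a - b) + (b - a).

Definition adj (m : nat) (u v : node m) : bool :=
  absdiff u.1 v.1 + absdiff u.2 v.2 == 1.

Definition is_link (m : nat) (e : {set node m}) : bool :=
  [exists u : node m, exists v : node m, adj u v && (e == [set u; v])].

Definition link (m : nat) : finType := {e : {set node m} | is_link e}.

(* state of the link between u and v (false if u,v not adjacent) *)
Definition link_open (m : nat) (wb : {ffun link m -> bool}) (u v : node m) : bool :=
  if @insub _ (@is_link m) (link m) [set u; v] is Some e then wb e else false.

(* size of the largest component (0 if no node is open) for a relation r
   whose steps only join open nodes *)
Definition largest_comp (m : nat) (open : pred (node m)) (r : rel (node m)) : nat :=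
  \max_(u : node m | open u) #|[set v | connect r u v]|.

Definition bond_rel (m : nat) (ws : {ffun node m -> bool}) (wb : {ffun link m -> bool})
  : rel (node m) :=
  fun u v => [&& ws u, ws v, adj u v & link_open wb u v].

Definition largest_bond_comp (m : nat) (ws : {ffun node m -> bool})
  (wb : {ffun link m -> bool}) : nat :=
  largest_comp ws (bond_rel ws wb).

Definition site_rel (m : nat) (ws : {ffun node m -> bool}) : rel (node m) :=
  fun u v => [&& ws u, ws v & adj u v].

Definition largest_site_comp (m : nat) (ws : {ffun node m -> bool}) : nat :=
  largest_comp ws (site_rel ws).

Local Open Scope ring_scope.
Definition bern {R : realFieldType} (p : R) (b : bool) : R := if b then p else 1 - p.

Definition site_weight {R : realFieldType} (m : nat) (p : R) (ws : {ffun node m -> bool}) : R :=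
  \prod_(v : node m) bern p (ws v).

Definition bond_weight {R : realFieldType} (m : nat) (q : R) (wb : {ffun link m -> bool}) : R :=
  \prod_(e : link m) bern q (wb e).

Definition P_mixed_ge {R : realFieldType} (m : nat) (p q : R) (k : nat) : R :=
  \sum_(ws : {ffun node m -> bool})
    \sum_(wb : {ffun link m -> bool} | (k <= largest_bond_comp ws wb)%N)
       site_weight p ws * bond_weight q wb.

Definition P_site_ge {R : realFieldType} (m : nat) (r : R) (k : nat) : R :=
  \sum_(ws : {ffun node m -> bool} | (k <= largest_site_comp ws)%N) site_weight r ws.

From HB Require Import structures.
From mathcomp Require Import all_boot all_order all_algebra.
From mathcomp Require Import ring zify.
Import Order.TTheory GRing.Theory Num.Theory.
Set Implicit Arguments. Unset Strict Implicit. Unset Printing Implicit Defensive.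

(* Give every node v Bernoulli variables for its own site (parameter p), for the at most two
   links it owns (q each) and one auxiliary variable (q ^ (2 - #owned links)), and call v open
   when all of them are 1.  The nodes are then independently open with probability p q^2, and
   two adjacent such nodes are bond-connected in the mixed model, the link between them being
   owned by one of them.  Rather than computing this marginal, both probabilities are read as
   multiaffine polynomials in the parameters of all these variables: on the unit cube such an
   inequality reduces to the vertices, where it is the pointwise comparison of the two largest
   clusters. *)


Section LinkOwner.
Variable m : nat.

Definition key (u : node m) : nat := u.1 + u.2.

Lemma adj_sym (u v : node m) : adj u v = adj v u.
Proof. by rewrite /adj /absdiff; apply/idP/idP => /eqP uv; apply/eqP; lia. Qed.

Lemma adj_key (u v : node m) : adj u v -> (key u < key v) || (key v < key u).
Proof. by rewrite /adj /absdiff /key => /eqP uv; apply/orP; lia. Qed.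

Lemma link_ends_ex (e : link m) :
  exists uv : node m * node m, [&& adj uv.1 uv.2, val e == [set uv.1; uv.2] & key uv.1 < key uv.2].
Proof.
have /existsP[u /existsP[v /andP[uv /eqP->]]] := valP e.
case/orP: (adj_key uv) => ltuv; first by exists (u, v); rewrite uv ltuv eqxx.
by exists (v, u); rewrite /= -adj_sym uv ltuv setUC eqxx.
Qed.

Definition link_ends (e : link m) : node m * node m := xchoose (link_ends_ex e).

(* Each link is owned by its endpoint with the smaller coordinate sum. *)
Definition owner (e : link m) : node m := (link_ends e).1.

Lemma link_endsP (e : link m) :
  [&& adj (owner e) (link_ends e).2, val e == [set owner e; (link_ends e).2]
    & key (owner e) < key (link_ends e).2].
Proof. exact: xchooseP (link_ends_ex e). Qed.

Lemma owner_in (e : link m) : owner e \in val e.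
Proof. by case/and3P: (link_endsP e) => _ /eqP-> _; rewrite set21. Qed.

(* An upper neighbour of [v] is [v + (1,0)] or [v + (0,1)], told apart by the second coordinate. *)
Lemma card_upper_nbrs (v : node m) : #|[set w | adj v w & key v < key w]| <= 2.
Proof.
rewrite -(card_in_imset (f := fun w : node m => w.2 == v.2 :> nat)).
  by rewrite -card_bool max_card.
move=> [a1 b1] [a2 b2]; rewrite !inE /adj /absdiff /key /=.
move=> /andP[/eqP adj1 lt1] /andP[/eqP adj2 lt2].
move=> same_row; suff [-> ->] : a1 = a2 /\ b1 = b2 by [].
by split; apply: val_inj; move: same_row; do 2 case: eqP => //=; lia.
Qed.

Lemma card_owned (v : node m) : #|[set e : link m | owner e == v]| <= 2.
Proof.
apply: leq_trans (card_upper_nbrs v).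
rewrite -(card_in_imset (f := fun e => (link_ends e).2)).
  apply/subset_leq_card/subsetP => w /imsetP[e]; rewrite inE => /eqP ve ->.
  by case/and3P: (link_endsP e) => ow _ lt; rewrite inE -ve ow lt.
move=> e1 e2; rewrite !inE => /eqP own1 /eqP own2 same_end; apply: val_inj.
case/and3P: (link_endsP e1) => _ /eqP-> _; case/and3P: (link_endsP e2) => _ /eqP-> _.
by rewrite own1 own2 same_end.
Qed.

End LinkOwner.

Lemma largest_comp_mono m (o1 o2 : pred (node m)) (r1 r2 : rel (node m)) :
  subpred o1 o2 -> subrel r1 r2 -> largest_comp o1 r1 <= largest_comp o2 r2.
Proof.
move=> o12 r12; apply/bigmax_leqP => u o1u; apply: leq_trans (leq_bigmax_cond _ (o12 _ o1u)).
apply/subset_leq_card/subsetP => w; rewrite !inE.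
by apply: connect_sub => a c /r12; exact: connect1.
Qed.

Local Open Scope ring_scope.

Section MultiAffine.
Variable R : realFieldType.

Definition affine (h : R -> R) := forall t, h t = t * h 1 + (1 - t) * h 0.
Definition const_fun (h : R -> R) := forall t, h t = h 0.

Lemma const_fun_affine (h : R -> R) : const_fun h -> affine h.
Proof. by move=> hc t; rewrite (hc t) (hc 1); ring. Qed.

Lemma affine_sum (I : finType) (P : pred I) (h : I -> R -> R) :
  (forall i, affine (h i)) -> affine (fun t => \sum_(i | P i) h i t).
Proof.
move=> ha t; rewrite (eq_bigr (fun i => t * h i 1 + (1 - t) * h i 0)) => [|i _]; last exact: ha.
by rewrite big_split -!mulr_sumr.
Qed.

Lemma affine_mul (h g : R -> R) :
  affine h -> affine g -> const_fun h \/ const_fun g -> affine (fun t => h t * g t).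
Proof.
move=> ha ga [hc|gc] t; first by rewrite (hc t) (hc 1) (ga t); ring.
by rewrite (gc t) (gc 1) (ha t); ring.
Qed.

Lemma const_fun_prod (I : finType) (P : pred I) (h : I -> R -> R) :
  (forall i, P i -> const_fun (h i)) -> const_fun (fun t => \prod_(i | P i) h i t).
Proof. by move=> hc t; apply: eq_bigr => i /hc. Qed.

Lemma affine_prod (I : finType) (P : pred I) (h : I -> R -> R) (i0 : I) :
  (forall i, P i -> affine (h i)) -> (forall i, P i -> i != i0 -> const_fun (h i)) ->
  affine (fun t => \prod_(i | P i) h i t).
Proof.
move=> ha hc; have [Pi0 | nPi0] := boolP (P i0); last first.
  apply/const_fun_affine/const_fun_prod => i Pi; apply: hc => //.
  by apply: contraNneq nPi0 => <-.
pose C := \prod_(i | P i && (i != i0)) h i 0.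
have split_i0 s : \prod_(i | P i) h i s = h i0 s * C.
  rewrite (bigD1 i0) //=; congr (_ * _).
  by apply: (const_fun_prod (P := fun i => P i && (i != i0))) => i /andP[]; exact: hc.
by move=> t; rewrite !split_i0 (ha _ Pi0 t); ring.
Qed.

Lemma affine_bern (h : R -> R) (b : bool) : affine h -> affine (fun t => bern (h t) b).
Proof. by move=> ha t; rewrite /bern; case: b; rewrite (ha t) //; ring. Qed.

Lemma const_fun_bern (h : R -> R) (b : bool) : const_fun h -> const_fun (fun t => bern (h t) b).
Proof. by move=> hc t; rewrite (hc t). Qed.

Variable J : finType.

Definition upd (th : {ffun J -> R}) (j : J) (t : R) : {ffun J -> R} :=
  [ffun k => if k == j then t else th k].

Lemma affine_upd (th : {ffun J -> R}) j k : affine (fun t => upd th j t k).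
Proof. by move=> t; rewrite !ffunE; case: eqP => _; ring. Qed.

Lemma const_fun_upd (th : {ffun J -> R}) j k : k != j -> const_fun (fun t => upd th j t k).
Proof. by move=> kj t; rewrite !ffunE (negbTE kj). Qed.

Lemma upd_id (th : {ffun J -> R}) j : upd th j (th j) = th.
Proof. by apply/ffunP => k; rewrite ffunE; case: eqP => [->|]. Qed.

Definition multiaffine (P : {ffun J -> R} -> R) :=
  forall th j, affine (fun t => P (upd th j t)).

Definition vertex (b : {ffun J -> bool}) : {ffun J -> R} := [ffun k => (b k)%:R].

(* Induction on the number of coordinates of [th] lying strictly inside (0, 1):
   affinity in one such coordinate writes [P (upd th j t)] as a convex combination
   of its values at [t = 0] and [t = 1]. *)
Lemma multiaffine_le (P1 P2 : {ffun J -> R} -> R) :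
  multiaffine P1 -> multiaffine P2 -> (forall b, P1 (vertex b) <= P2 (vertex b)) ->
  forall th : {ffun J -> R}, (forall k, 0 <= th k <= 1) -> P1 th <= P2 th.
Proof.
move=> a1 a2 le_vertex.
suff le_free n (D : {set J}) (th : {ffun J -> R}) : #|D| = n -> (forall k, 0 <= th k <= 1) ->
    (forall k, k \notin D -> (th k == 0) || (th k == 1)) -> P1 th <= P2 th.
  by move=> th th01; apply: (le_free _ setT th erefl th01) => k; rewrite in_setT.
elim: n D th => [|n IHn] D th cardD th01 bool_out.
  have -> : th = vertex [ffun k => th k == 1].
    apply/ffunP => k; rewrite !ffunE.
    have := bool_out k; rewrite (cards0_eq cardD) in_set0 => /(_ isT) /orP[] /eqP ->.
      by rewrite eq_sym oner_eq0.
    by rewrite eqxx.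
  exact: le_vertex.
have [j Dj] : exists j, j \in D by apply/set0Pn; rewrite -card_gt0 cardD.
have cardDj : #|D :\ j| = n by move: cardD; rewrite (cardsD1 j D) Dj add1n => -[].
have le_bool x : (x == 0) || (x == 1) -> 0 <= x <= 1 -> P1 (upd th j x) <= P2 (upd th j x).
  move=> x01 x01'; apply: (IHn (D :\ j)) => // k; rewrite ffunE; first by case: eqP.
  by rewrite in_setD1 negb_and negbK; case: eqP => //= _ /bool_out.
have /andP[t0 t1] := th01 j.
rewrite -(upd_id th j) (a1 th j (th j)) (a2 th j (th j)).
apply: lerD; apply: ler_wpM2l; rewrite ?subr_ge0 //; apply: le_bool;
  by rewrite ?eqxx ?orbT ?ler01 ?lexx.
Qed.

Lemma bern_sum_vertex (I : finType) (b : {ffun I -> bool}) (F : {ffun I -> bool} -> R) :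
  \sum_(w : {ffun I -> bool}) (\prod_i bern (b i)%:R (w i)) * F w = F b.
Proof.
rewrite (bigD1 b) //= [X in _ + X]big1 ?addr0.
  by rewrite big1 ?mul1r // => i _; rewrite /bern; case: (b i); rewrite ?subr0.
move=> w wb; have [i wbi] : exists i, w i != b i.
  apply/existsP; apply: contraNT wb => /existsPn wb.
  by apply/eqP/ffunP => i; apply/eqP/negPn/wb.
rewrite (bigD1 i) //= /bern.
by move: wbi; case: (b i); case: (w i) => //= _; rewrite ?subrr !mul0r.
Qed.

End MultiAffine.

Arguments vertex {R J}.

Section BernoulliProduct.
Variables (R : realFieldType) (J I : finType) (iota : I -> J).

Lemma const_fun_prod_bern_upd (th : {ffun J -> R}) j (w : {ffun I -> bool}) :
  (forall i, iota i != j) -> const_fun (fun t => \prod_i bern (upd th j t (iota i)) (w i)).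
Proof. by move=> nj; apply: const_fun_prod => i _; apply/const_fun_bern/const_fun_upd. Qed.

Lemma affine_prod_bern_upd (th : {ffun J -> R}) j (w : {ffun I -> bool}) :
  injective iota -> affine (fun t => \prod_i bern (upd th j t (iota i)) (w i)).
Proof.
move=> iota_inj; have [i0 /eqP iota_i0 | nj] := pickP (fun i => iota i == j); last first.
  by apply/const_fun_affine/const_fun_prod_bern_upd => i; rewrite nj.
apply: (affine_prod (i0 := i0)) => i _; first exact/affine_bern/affine_upd.
by move=> ni0; apply/const_fun_bern/const_fun_upd; rewrite -iota_i0 (inj_eq iota_inj).
Qed.

End BernoulliProduct.

Lemma prodr_natb (R : realFieldType) (I : finType) (P : pred I) (b : I -> bool) :
  \prod_(i | P i) ((b i)%:R : R) = ([forall i, P i ==> b i])%:R.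
Proof.
have [/forallP allb | ] := boolP [forall i, P i ==> b i].
  by rewrite big1 // => i Pi; rewrite (implyP (allb i) Pi).
rewrite negb_forall => /existsP[i]; rewrite negb_imply => /andP[Pi nbi].
by rewrite (bigD1 i) //= (negbTE nbi) mul0r.
Qed.

Section Coupling.
Variables (R : realFieldType) (m : nat).

(* A site variable per node, a variable per link, and an auxiliary variable per node. *)
Definition coord : finType := (node m + link m + node m)%type.

Definition coord_node (k : coord) : node m :=
  match k with inl (inl v) => v | inl (inr e) => owner e | inr v => v end.

Definition node_param (th : {ffun coord -> R}) (v : node m) : R :=
  \prod_(k | coord_node k == v) th k.

Definition site_poly (n : nat) (th : {ffun coord -> R}) : R :=
  \sum_(x : {ffun node m -> bool})
     (\prod_v bern (node_param th v) (x v)) * (n <= largest_site_comp x)%:R.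

Definition mixed_poly (n : nat) (th : {ffun coord -> R}) : R :=
  \sum_(ws : {ffun node m -> bool}) \sum_(wb : {ffun link m -> bool})
     (\prod_v bern (th (inl (inl v))) (ws v)) * (\prod_e bern (th (inl (inr e))) (wb e))
     * (n <= largest_bond_comp ws wb)%:R.

Lemma affine_node_param th j v : affine (fun t => node_param (upd th j t) v).
Proof.
apply: (affine_prod (i0 := j)) => k _; first exact: affine_upd.
exact: const_fun_upd.
Qed.

Lemma const_fun_node_param th j v :
  coord_node j != v -> const_fun (fun t => node_param (upd th j t) v).
Proof.
move=> jv; apply: const_fun_prod => k /eqP kv; apply: const_fun_upd.
by apply: contraNneq jv => <-; rewrite kv.
Qed.

Lemma multiaffine_site_poly n : multiaffine (site_poly n).
Proof.
move=> th j; apply: affine_sum => x.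
apply: affine_mul; [|exact: const_fun_affine|by right].
apply: (affine_prod (i0 := coord_node j)) => v _.
  exact/affine_bern/affine_node_param.
by rewrite eq_sym => jv; apply/const_fun_bern/const_fun_node_param.
Qed.

Lemma multiaffine_mixed_poly n : multiaffine (mixed_poly n).
Proof.
move=> th j; apply: affine_sum => ws; apply: affine_sum => wb.
apply: affine_mul; [|exact: const_fun_affine|by right].
have inj_site : injective (fun v : node m => inl (inl v) : coord) by move=> ? ? [].
have inj_link : injective (fun e : link m => inl (inr e) : coord) by move=> ? ? [].
apply: affine_mul; [exact: affine_prod_bern_upd|exact: affine_prod_bern_upd|].
by case: j => [[v|e]|v]; [right|left|left]; apply: const_fun_prod_bern_upd.
Qed.

Definition site_config (b : {ffun coord -> bool}) : {ffun node m -> bool} :=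
  [ffun v => [forall k, (coord_node k == v) ==> b k]].

Lemma site_poly_vertex n b :
  site_poly n (vertex b) = (n <= largest_site_comp (site_config b))%:R.
Proof.
rewrite /site_poly -(bern_sum_vertex (site_config b) (fun x => (n <= largest_site_comp x)%:R)).
apply: eq_bigr => x _; congr (_ * _); apply: eq_bigr => v _; congr bern.
by rewrite /node_param ffunE -prodr_natb; apply: eq_bigr => k _; rewrite ffunE.
Qed.

Lemma mixed_poly_vertex n b :
  mixed_poly n (vertex b) =
  (n <= largest_bond_comp [ffun v => b (inl (inl v))] [ffun e => b (inl (inr e))])%:R.
Proof.
set wb0 := [ffun e => b (inl (inr e))].
rewrite /mixed_poly -(bern_sum_vertex _ (fun ws => (n <= largest_bond_comp ws wb0)%:R)).
apply: eq_bigr => ws _.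
rewrite -(bern_sum_vertex wb0 (fun wb => (n <= largest_bond_comp ws wb)%:R)) mulr_sumr.
apply: eq_bigr => wb _; rewrite mulrA; congr (_ * _ * _); apply: eq_bigr => i _;
  by rewrite !ffunE.
Qed.

(* The link of a site step is owned by one of its two endpoints, both of which are open. *)
Lemma largest_site_le_bond b :
  (largest_site_comp (site_config b)
   <= largest_bond_comp [ffun v => b (inl (inl v))] [ffun e => b (inl (inr e))])%N.
Proof.
have attached u k : site_config b u -> coord_node k = u -> b k.
  by rewrite ffunE => /forallP/(_ k)/implyP + ku; apply; rewrite ku.
apply: largest_comp_mono => [u bu | u v /and3P[bu bv uv]].
  by rewrite ffunE; apply: attached bu _.
rewrite /bond_rel uv !ffunE (attached u _ bu) ?(attached v _ bv) //= /link_open.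
have uv_link : is_link [set u; v].
  by apply/existsP; exists u; apply/existsP; exists v; rewrite uv eqxx.
rewrite insubT ffunE; set e := Sub _ _.
by have /set2P[] := owner_in e => owner_e; [apply: (attached u) | apply: (attached v)].
Qed.

Definition nb_owned (v : node m) : nat := #|[set e : link m | owner e == v]|.

(* The auxiliary coordinate of [v] makes up for the links [v] does not own, so that the
   coordinates attached to every node multiply to [p * q ^+ 2] (see [card_owned]). *)
Definition coupling_param (p q : R) : {ffun coord -> R} :=
  [ffun k => match k with
             | inl (inl _) => p | inl (inr _) => q | inr v => q ^+ (2 - nb_owned v) end].

Lemma node_param_coupling p q v : node_param (coupling_param p q) v = p * q ^+ 2.
Proof.
rewrite /node_param !big_sumType /= !big_pred1_eq !ffunE.
rewrite (eq_bigr (fun _ => q)) => [|e _]; last by rewrite ffunE.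
rewrite (eq_bigl [in [set e : link m | owner e == v]]) => [|e]; last by rewrite inE.
by rewrite prodr_const -mulrA -exprD subnKC //; exact: card_owned.
Qed.

Lemma site_poly_coupling n p q :
  site_poly n (coupling_param p q) = P_site_ge m (p * q ^+ 2) n.
Proof.
rewrite /P_site_ge [RHS]big_mkcond; apply: eq_bigr => x _.
under eq_bigr do rewrite node_param_coupling.
by case: ifP; rewrite ?mulr1 ?mulr0.
Qed.

Lemma mixed_poly_coupling n p q :
  mixed_poly n (coupling_param p q) = P_mixed_ge m p q n.
Proof.
apply: eq_bigr => ws _; rewrite [RHS]big_mkcond; apply: eq_bigr => wb _.
case: ifP; rewrite ?mulr1 ?mulr0 // => _.
by congr (_ * _); apply: eq_bigr => i _; rewrite ffunE.
Qed.

Lemma coupling_param_unit p q :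
  0 <= p <= 1 -> 0 <= q <= 1 -> forall k, 0 <= coupling_param p q k <= 1.
Proof.
move=> p01 q01 [[v|e]|v]; rewrite ffunE //.
by case/andP: q01 => q0 q1; rewrite exprn_ge0 ?exprn_ile1.
Qed.

End Coupling.

Theorem lemma4 (R : realFieldType) (m : nat) (p q : R) :
  0 <= p <= 1 -> 0 <= q <= 1 ->
  forall k : nat, P_site_ge m (p * q ^+ 2) k <= P_mixed_ge m p q k.
Proof.
move=> p01 q01 k; rewrite -site_poly_coupling -mixed_poly_coupling.
apply: multiaffine_le; [exact: multiaffine_site_poly|exact: multiaffine_mixed_poly| |].
  move=> b; rewrite site_poly_vertex mixed_poly_vertex ler_nat.
  by case ks: (k <= _)%N => //=; rewrite (leq_trans ks (largest_site_le_bond b)).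
exact: coupling_param_unit.
Qed.
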